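(* Let $M$ be a smooth $n$-manifold with a torsion-free linear connection $\nabla$ and a symmetric $(0,2)$-tensor field $c$, let $\overline g_{\nabla,c}$ be the modified Riemannian extension on $T^{\ast}M$, and let $\widetilde{\nabla}$ be the linear connection on $T^{\ast}M$ given in the adapted frame by $\widetilde{\nabla}_{E_{\overline{i}}}E_{\overline{j}}=0$, $\widetilde{\nabla}_{E_{\overline{i}}}E_{j}=0$, $\widetilde{\nabla}_{E_{i}}E_{\overline{j}}=-\Gamma^{j}_{ih}E_{\overline{h}}$, $\widetilde{\nabla}_{E_{i}}E_{j}=\Gamma^{h}_{ij}E_{h}+\tfrac12(\nabla_i c_{jh}+\nabla_j c_{ih}-\nabla_h c_{ij})E_{\overline{h}}$. Then the scalar curvature $\widetilde r=\widetilde R_{\alpha\beta}(\overline g_{\nabla,c})^{\alpha\beta}$ of $\widetilde\nabla$ with respect to $\overline g_{\nabla,c}$ vanishes identically.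
   Context: Summation convention; $\overline{i}=n+i$; Greek indices run over the full adapted frame $\{E_j,E_{\overline j}\}$. $\Gamma^h_{ij}$ are the coefficients of $\nabla$ in local coordinates $(x^i)$; $\nabla_ic_{jk}$ the components of $\nabla c$. On $T^{\ast}M$ use induced coordinates $(x^i,p_i)$, $\partial_{\overline i}=\partial/\partial p_i$, and the adapted frame $E_j=\partial_j+p_a\Gamma^a_{hj}\partial_{\overline h}$, $E_{\overline j}=\partial_{\overline j}$. The modified Riemannian extension is $\overline{g}_{\nabla,c}(E_i,E_j)=c_{ij}$, $\overline{g}_{\nabla,c}(E_i,E_{\overline j})=\overline{g}_{\nabla,c}(E_{\overline j},E_i)=\delta_i^j$, $\overline{g}_{\nabla,c}(E_{\overline i},E_{\overline j})=0$, and $(\overline g_{\nabla,c})^{\alpha\beta}$ denotes its inverse. $\widetilde R_{\alpha\beta}=\widetilde R_{\sigma\alpha\beta}^{\ \ \ \ \sigma}$ is the Ricci tensor of $\widetilde\nabla$, where $\widetilde R(E_\alpha,E_\beta)E_\gamma=\widetilde R_{\alpha\beta\gamma}^{\ \ \ \ \varepsilon}E_\varepsilon$ and $\widetilde R(X,Y)=\widetilde\nabla_X\widetilde\nabla_Y-\widetilde\nabla_Y\widetilde\nabla_X-\widetilde\nabla_{[X,Y]}$. *)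

From HB Require Import structures.
From mathcomp Require Import all_boot all_order all_algebra.
From mathcomp Require Import all_classical all_reals all_analysis.
Set Implicit Arguments. Unset Strict Implicit. Unset Printing Implicit Defensive.
Import Order.TTheory GRing.Theory Num.Theory.
Import numFieldNormedType.Exports.
Local Open Scope classical_set_scope.
Local Open Scope ring_scope.

Fixpoint iterD {R : realType} {m : nat} (vs : seq 'rV[R]_m)
  (f : 'rV[R]_m -> R) : 'rV[R]_m -> R :=
  match vs with
  | [::] => f
  | v :: vs' => fun x => derive (iterD vs' f) x v
  end.

Definition smooth_on {R : realType} {m : nat} (U : set 'rV[R]_m)
  (f : 'rV[R]_m -> R) : Prop :=
  forall (vs : seq 'rV[R]_m) (x : 'rV[R]_m), U x -> differentiable (iterD vs f) x.

Section TcotConn.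
Context {R : realType} {n : nat}.
(* Gam h i j x = Gamma^h_{ij}(x), c i j x = c_{ij}(x), in a chart of M *)
Variables (Gam : 'I_n -> 'I_n -> 'I_n -> 'rV[R]_n -> R)
          (c : 'I_n -> 'I_n -> 'rV[R]_n -> R).

Definition pd (i : 'I_n) (f : 'rV[R]_n -> R) (x : 'rV[R]_n) : R :=
  derive f x (delta_mx 0 i).

Definition nablac (i j k : 'I_n) (x : 'rV[R]_n) : R :=
  pd i (c j k) x - \sum_a Gam a i j x * c a k x - \sum_a Gam a i k x * c j a x.

(* points z = (x^i, p_i) of T^*U, z : 'rV_(n+n); lshift = x-index, rshift = p-index *)
Definition xpart (z : 'rV[R]_(n + n)) : 'rV[R]_n := lsubmx z.
Definition ppart (z : 'rV[R]_(n + n)) : 'rV[R]_n := rsubmx z.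

(* adapted frame: E_j = d_j + p_a Gamma^a_{hj} d_{bar h},  E_{bar j} = d_{bar j} *)
Definition Efr (al : 'I_(n + n)) (z : 'rV[R]_(n + n)) : 'rV[R]_(n + n) :=
  \row_k match fintype.split al, fintype.split k with
         | inl j, inl k' => (k' == j)%:R
         | inl j, inr h => \sum_a ppart z 0 a * Gam a h j (xpart z)
         | inr _, inl _ => 0
         | inr j, inr h => (h == j)%:R
         end.

Definition frame_mx (z : 'rV[R]_(n + n)) : 'M[R]_(n + n) :=
  \matrix_(a, k) Efr a z 0 k.

(* frame components of a vector field V : V z = sum_a (fc V z 0 a) E_a(z) *)
Definition fc (V : 'rV[R]_(n + n) -> 'rV[R]_(n + n)) (z : 'rV[R]_(n + n))
  : 'rV[R]_(n + n) := V z *m invmx (frame_mx z).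

(* connection coefficients: nabla~_{E_al} E_be = sum_ep Cc al be ep E_ep *)
Definition Cc (al be ep : 'I_(n + n)) (z : 'rV[R]_(n + n)) : R :=
  let x := xpart z in
  match fintype.split al, fintype.split be, fintype.split ep with
  | inr _, _, _ => 0
  | inl i, inr j, inr h => - Gam j i h x
  | inl _, inr _, inl _ => 0
  | inl i, inl j, inl h => Gam h i j x
  | inl i, inl j, inr h =>
      2^-1 * (nablac i j h x + nablac j i h x - nablac h i j x)
  end.

(* the connection nabla~ on arbitrary vector fields, extended by linearity
   and the Leibniz rule from its values on the adapted frame *)
Definition nablaT (X Y : 'rV[R]_(n + n) -> 'rV[R]_(n + n)) (z : 'rV[R]_(n + n))
  : 'rV[R]_(n + n) :=
  \sum_b derive (fun z' => fc Y z' 0 b) z (X z) *: Efr b z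
  + \sum_a \sum_b \sum_e (fc X z 0 a * fc Y z 0 b * Cc a b e z) *: Efr e z.

Definition lie (X Y : 'rV[R]_(n + n) -> 'rV[R]_(n + n)) (z : 'rV[R]_(n + n))
  : 'rV[R]_(n + n) := derive Y z (X z) - derive X z (Y z).

Definition curv (X Y Z : 'rV[R]_(n + n) -> 'rV[R]_(n + n)) (z : 'rV[R]_(n + n))
  : 'rV[R]_(n + n) :=
  nablaT X (nablaT Y Z) z - nablaT Y (nablaT X Z) z - nablaT (lie X Y) Z z.

Definition curv_comp (al be ga ep : 'I_(n + n)) (z : 'rV[R]_(n + n)) : R :=
  fc (curv (Efr al) (Efr be) (Efr ga)) z 0 ep.

Definition ricT (al be : 'I_(n + n)) (z : 'rV[R]_(n + n)) : R :=
  \sum_s curv_comp s al be s z.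

(* modified Riemannian extension in the adapted frame *)
Definition gext (z : 'rV[R]_(n + n)) : 'M[R]_(n + n) :=
  \matrix_(a, b) match fintype.split a, fintype.split b with
                 | inl i, inl j => c i j (xpart z)
                 | inl i, inr j => (i == j)%:R
                 | inr i, inl j => (i == j)%:R
                 | inr _, inr _ => 0
                 end.

Definition scalT (z : 'rV[R]_(n + n)) : R :=
  \sum_a \sum_b ricT a b z * invmx (gext z) a b.

End TcotConn.

From HB Require Import structures.
From mathcomp Require Import all_boot all_order all_algebra.
From mathcomp Require Import all_classical all_reals all_analysis.
Import Order.TTheory GRing.Theory Num.Theory.
Import numFieldNormedType.Exports.
Local Open Scope classical_set_scope.
Local Open Scope ring_scope.

(* In the adapted frame the inverse of the modified Riemannian extension is
   the block matrix [[0, 1], [1, -c]], so the scalar curvature only involves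
   the Ricci components R~_{al jbar} and R~_{ibar j}, and both vanish for
   structural reasons: the coefficients Gamma~_{ibar be}^ga and
   Gamma~_{al jbar}^h are zero, all coefficients depend on x alone, the
   vertical frame fields E_kbar are constant and the brackets [E_al, E_kbar]
   are vertical. *)

Lemma split_lshift m k (i : 'I_m) : fintype.split (lshift k i) = inl i.
Proof. exact: (unsplitK (inl _ i)). Qed.

Lemma split_rshift m k (i : 'I_k) : fintype.split (rshift m i) = inr i.
Proof. exact: (unsplitK (inr _ i)). Qed.

Lemma sum_delta_l {R : nzSemiRingType} {I : finType} (j : I) (F : I -> R) :
  \sum_i (i == j)%:R * F i = F j.
Proof.
rewrite (bigD1 j) //= eqxx mul1r big1 ?addr0 // => i /negbTE ->.
by rewrite mul0r.
Qed.

Lemma subr_mxE {R : zmodType} m k (A B : 'M[R]_(m, k)) i j :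
  (A - B) i j = A i j - B i j.
Proof. by rewrite !mxE. Qed.

Lemma derive_along_line {R : numFieldType} {V W : normedModType R}
    (f : V -> W) (a v : V) (w : W) :
  (forall t : R, f (t *: v + a) = f a + t *: w) -> derive f a v = w.
Proof.
move=> f_line; apply: cvg_lim => //; apply: cvg_near_cst; near=> h.
rewrite /= /shift f_line addrC addKr scalerA mulVf ?scale1r //.
near: h; exact: nbhs_dnbhs_neq.
Unshelve. all: end_near.
Qed.

Lemma invmx_block_C110 {R : comUnitRingType} {n : nat} (C : 'M[R]_n) :
  invmx (block_mx C 1%:M 1%:M 0) = block_mx 0 1%:M 1%:M (- C).
Proof.
have inv_right : block_mx C 1%:M 1%:M 0 *m block_mx 0 1%:M 1%:M (- C) = 1%:M.
  rewrite mulmx_block !mulmx0 !mul0mx !mulmx1 !mul1mx add0r !addr0 subrr.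
  by rewrite [RHS]scalar_mx_block.
have [unitA _] := mulmx1_unit inv_right.
by rewrite -[RHS](mulKmx unitA) inv_right mulmx1.
Qed.

Section CotangentFrame.
Context {R : realType} {n : nat}.
Variables (Gam : 'I_n -> 'I_n -> 'I_n -> 'rV[R]_n -> R)
          (c : 'I_n -> 'I_n -> 'rV[R]_n -> R).

Local Notation E := (Efr Gam).
Local Notation C := (Cc Gam c).
Local Notation fcE := (fc Gam).
Local Notation nablaE := (nablaT Gam c).

Definition frame_ur (z : 'rV[R]_(n + n)) : 'M[R]_n :=
  \matrix_(j, h) \sum_a ppart z 0 a * Gam a h j (xpart z).

Lemma frame_mx_block z : frame_mx Gam z = block_mx 1%:M (frame_ur z) 0 1%:M.
Proof.
apply/matrixP => a k.
case: (split_ordP a) => i ->; case: (split_ordP k) => j ->;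
by rewrite ?(block_mxEul, block_mxEur, block_mxEdl, block_mxEdr) !mxE
  ?split_lshift ?split_rshift // eq_sym.
Qed.

Lemma row_frame_mx d z : row d (frame_mx Gam z) = E d z.
Proof. by apply/rowP => k; rewrite !mxE. Qed.

Lemma frame_mx_unit z : frame_mx Gam z \in unitmx.
Proof. by rewrite frame_mx_block unitmxE det_ublock !det1 mulr1 unitr1. Qed.

Lemma fc_frame (V : 'rV[R]_(n + n) -> 'rV[R]_(n + n)) z w :
  V z = w *m frame_mx Gam z -> fcE V z = w.
Proof. by move=> Vz; rewrite /fc Vz mulmxK // frame_mx_unit. Qed.

Lemma fc_Efr b z e : fcE (E b) z 0 e = (e == b)%:R.
Proof.
rewrite (@fc_frame _ _ (delta_mx 0 b)) ?mxE ?eqxx //.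
by rewrite -rowE; apply/rowP => k; rewrite !mxE.
Qed.

Lemma lsubmx_fc (V : 'rV[R]_(n + n) -> 'rV[R]_(n + n)) z :
  lsubmx (fcE V z) = lsubmx (V z).
Proof.
have -> : V z = fcE V z *m frame_mx Gam z by rewrite /fc mulmxKV // frame_mx_unit.
set w := fcE V z.
by rewrite frame_mx_block -[w]hsubmxK mul_row_block mulmx1 mulmx0 addr0 !row_mxKl.
Qed.

Lemma fc_horiz (V : 'rV[R]_(n + n) -> 'rV[R]_(n + n)) z h :
  fcE V z 0 (lshift n h) = V z 0 (lshift n h).
Proof.
by have := congr1 (fun M : 'rV_n => M 0 h) (lsubmx_fc V z); rewrite !mxE.
Qed.

Lemma fc_nablaT X Y z e :
  fcE (nablaE X Y) z 0 e =
  derive (fun z' => fcE Y z' 0 e) z (X z)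
  + \sum_a \sum_b fcE X z 0 a * fcE Y z 0 b * C a b e z.
Proof.
rewrite (@fc_frame _ _ (\row_e (derive (fun z' => fcE Y z' 0 e) z (X z)
  + \sum_a \sum_b fcE X z 0 a * fcE Y z 0 b * C a b e z))) ?mxE //.
rewrite mulmx_sum_row /nablaT.
under [RHS]eq_bigr => d _ do rewrite mxE row_frame_mx scalerDl scaler_suml.
rewrite big_split /=; congr (_ + _).
rewrite [RHS]exchange_big /=; apply: eq_bigr => a _.
under [RHS]eq_bigr do rewrite scaler_suml.
by rewrite [RHS]exchange_big.
Qed.

Lemma derive_fc_Efr b e z v : derive (fun z' => fcE (E b) z' 0 e) z v = 0.
Proof.
have -> : (fun z' => fcE (E b) z' 0 e) = cst (e == b)%:R.
  by apply/funext => z'; rewrite fc_Efr.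
exact: derive_cst.
Qed.

Lemma fc_nablaT_Efr_l a Y z e :
  fcE (nablaE (E a) Y) z 0 e =
  derive (fun z' => fcE Y z' 0 e) z (E a z) + \sum_b fcE Y z 0 b * C a b e z.
Proof.
rewrite fc_nablaT; congr (_ + _).
under eq_bigr do under eq_bigr do rewrite fc_Efr -mulrA.
under eq_bigr do rewrite -mulr_sumr.
exact: sum_delta_l.
Qed.

Lemma fc_nablaT_Efr_r X b z e :
  fcE (nablaE X (E b)) z 0 e = \sum_a fcE X z 0 a * C a b e z.
Proof.
rewrite fc_nablaT derive_fc_Efr add0r; apply: eq_bigr => a _.
under eq_bigr do rewrite fc_Efr mulrAC mulrC.
exact: sum_delta_l.
Qed.

Lemma fc_nablaT_Efr a b z e : fcE (nablaE (E a) (E b)) z 0 e = C a b e z.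
Proof.
rewrite fc_nablaT_Efr_r.
under eq_bigr do rewrite fc_Efr.
exact: sum_delta_l.
Qed.

Lemma derive_fc_nablaT_Efr a b e z v :
  derive (fun z' => fcE (nablaE (E a) (E b)) z' 0 e) z v = derive (C a b e) z v.
Proof.
by have -> : (fun z' => fcE (nablaE (E a) (E b)) z' 0 e) = C a b e
  by apply/funext => z'; rewrite fc_nablaT_Efr.
Qed.

Lemma fc_curv X Y Z z :
  fcE (curv Gam c X Y Z) z = fcE (nablaE X (nablaE Y Z)) z
    - fcE (nablaE Y (nablaE X Z)) z - fcE (nablaE (lie X Y) Z) z.
Proof. by rewrite /fc /curv !mulmxBl. Qed.

Lemma curv_comp_formula s a b e z :
  curv_comp Gam c s a b e z =
    derive (C a b e) z (E s z) - derive (C s b e) z (E a z)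
    + \sum_d (C a b d z * C s d e z - C s b d z * C a d e z)
    - \sum_d fcE (lie (E s) (E a)) z 0 d * C d b e z.
Proof.
rewrite /curv_comp fc_curv 2!subr_mxE.
(* Untargeted rewrites would try to unify [E _] with [nablaT _ _] and unfold
   both, which is prohibitively slow. *)
rewrite [X in _ - X = _]fc_nablaT_Efr_r [X in _ - X - _ = _]fc_nablaT_Efr_l.
rewrite [X in X - _ - _ = _]fc_nablaT_Efr_l !derive_fc_nablaT_Efr.
under eq_bigr do rewrite fc_nablaT_Efr.
under [X in _ - (_ + X)]eq_bigr do rewrite fc_nablaT_Efr.
by rewrite sumrB opprD addrACA.
Qed.

Lemma xpart_line (t : R) (v z : 'rV[R]_(n + n)) :
  xpart (t *: v + z) = t *: xpart v + xpart z.
Proof. by rewrite /xpart linearD linearZ. Qed.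

Lemma ppart_line (t : R) (v z : 'rV[R]_(n + n)) :
  ppart (t *: v + z) = t *: ppart v + ppart z.
Proof. by rewrite /ppart linearD linearZ. Qed.

Lemma derive_xpart_vert (F : 'rV[R]_(n + n) -> R) z v :
  (forall z1 z2, xpart z1 = xpart z2 -> F z1 = F z2) -> xpart v = 0 ->
  derive F z v = 0.
Proof.
move=> F_x v_vert; apply: derive_along_line => t.
by rewrite scaler0 addr0; apply: F_x; rewrite xpart_line v_vert scaler0 add0r.
Qed.

Lemma xpart_Efr_vert k z : xpart (E (rshift n k) z) = 0.
Proof. by apply/rowP => j; rewrite !mxE split_rshift split_lshift. Qed.

Lemma derive_Efr_vert k z v : derive (E (rshift n k)) z v = 0.
Proof.
apply: derive_along_line => t; rewrite scaler0 addr0.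
by apply/rowP => j; rewrite !mxE split_rshift.
Qed.

Lemma derive_Efr_vert_horiz s z v h : xpart v = 0 ->
  derive (E s) z v 0 (lshift n h) = 0.
Proof.
move=> v_vert.
(* With x fixed, E s is affine in p; this is its slope along v. *)
rewrite (@derive_along_line _ _ _ _ _ _ (\row_k
    match fintype.split s, fintype.split k with
    | inl j, inr h => \sum_a ppart v 0 a * Gam a h j (xpart z)
    | _, _ => 0
    end)); first by rewrite mxE split_lshift; case: (fintype.split s).
move=> t; apply/rowP => k; rewrite !mxE xpart_line v_vert scaler0 add0r.
case: (fintype.split s) => j; case: (fintype.split k) => h';
  rewrite ?mulr0 ?addr0 //.
rewrite mulr_sumr -big_split /=; apply: eq_bigr => a _.
by rewrite ppart_line !mxE mulrDl addrC mulrA.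
Qed.

Lemma lie_Efr_vert_l k s z h :
  fcE (lie (E (rshift n k)) (E s)) z 0 (lshift n h) = 0.
Proof.
rewrite fc_horiz /lie derive_Efr_vert subr0.
by apply: derive_Efr_vert_horiz; exact: xpart_Efr_vert.
Qed.

Lemma lie_Efr_vert_r k s z h :
  fcE (lie (E s) (E (rshift n k))) z 0 (lshift n h) = 0.
Proof.
rewrite fc_horiz /lie derive_Efr_vert sub0r mxE.
by rewrite derive_Efr_vert_horiz ?oppr0 ?xpart_Efr_vert.
Qed.

Lemma Cc_xpart a b e z1 z2 : xpart z1 = xpart z2 -> C a b e z1 = C a b e z2.
Proof. by rewrite /Cc => ->. Qed.

Lemma Cc_vert_l i b e z : C (rshift n i) b e z = 0.
Proof. by rewrite /Cc split_rshift. Qed.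

Lemma Cc_vert_horiz a j h z : C a (rshift n j) (lshift n h) z = 0.
Proof. by rewrite /Cc split_rshift split_lshift; case: (fintype.split a). Qed.

Lemma derive_Cc_Efr_vert a b e k z :
  derive (C a b e) z (E (rshift n k) z) = 0.
Proof. exact: derive_xpart_vert (@Cc_xpart a b e) (xpart_Efr_vert k z). Qed.

Lemma derive_Cc_vert_l i b e z v : derive (C (rshift n i) b e) z v = 0.
Proof.
have -> : C (rshift n i) b e = cst 0 by apply/funext => z'; rewrite Cc_vert_l.
exact: derive_cst.
Qed.

Lemma derive_Cc_vert_horiz a j h z v :
  derive (C a (rshift n j) (lshift n h)) z v = 0.
Proof.
have -> : C a (rshift n j) (lshift n h) = cst 0.
  by apply/funext => z'; rewrite Cc_vert_horiz.
exact: derive_cst.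
Qed.

Lemma Cc_vert_mid a j s h d z :
  C a (rshift n j) d z * C s d (lshift n h) z = 0.
Proof.
case: (split_ordP d) => [d' ->|d' ->]; first by rewrite Cc_vert_horiz mul0r.
by rewrite Cc_vert_horiz mulr0.
Qed.

Lemma ricT_vert_r a j z : ricT Gam c a (rshift n j) z = 0.
Proof.
rewrite /ricT; apply: big1 => s _; rewrite curv_comp_formula.
case: (split_ordP s) => k ->.
- rewrite !derive_Cc_vert_horiz subrr add0r.
  rewrite !big1 ?subrr // => d _; first by rewrite Cc_vert_horiz mulr0.
  by rewrite !Cc_vert_mid subrr.
- rewrite derive_Cc_Efr_vert derive_Cc_vert_l subrr add0r.
  rewrite !big1 ?subrr // => d _.
    case: (split_ordP d) => d' ->; first by rewrite lie_Efr_vert_l mul0r.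
    by rewrite Cc_vert_l mulr0.
  by rewrite !Cc_vert_l !(mulr0, mul0r) subrr.
Qed.

Lemma ricT_vert_horiz i j z : ricT Gam c (rshift n i) (lshift n j) z = 0.
Proof.
rewrite /ricT; apply: big1 => s _; rewrite curv_comp_formula.
rewrite derive_Cc_vert_l derive_Cc_Efr_vert subrr add0r.
rewrite !big1 ?subrr // => d _.
  case: (split_ordP d) => d' ->; first by rewrite lie_Efr_vert_r mul0r.
  by rewrite Cc_vert_l mulr0.
by rewrite !Cc_vert_l !(mulr0, mul0r) subrr.
Qed.

Lemma gext_block z :
  gext c z = block_mx (\matrix_(i, j) c i j (xpart z)) 1%:M 1%:M 0.
Proof.
apply/matrixP => a b.
case: (split_ordP a) => i ->; case: (split_ordP b) => j ->;
by rewrite ?(block_mxEul, block_mxEur, block_mxEdl, block_mxEdr) !mxE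
  ?split_lshift ?split_rshift.
Qed.

Lemma invmx_gext_horiz i j z : invmx (gext c z) (lshift n i) (lshift n j) = 0.
Proof. by rewrite gext_block invmx_block_C110 block_mxEul mxE. Qed.

End CotangentFrame.

Theorem theorem4 (R : realType) (n : nat) (U : set 'rV[R]_n)
  (Gam : 'I_n -> 'I_n -> 'I_n -> 'rV[R]_n -> R)
  (c : 'I_n -> 'I_n -> 'rV[R]_n -> R) :
  open U ->
  (forall h i j, smooth_on U (Gam h i j)) ->
  (forall i j, smooth_on U (c i j)) ->
  (forall h i j x, U x -> Gam h i j x = Gam h j i x) ->
  (forall i j x, U x -> c i j x = c j i x) ->
  forall z : 'rV[R]_(n + n), U (xpart z) -> scalT Gam c z = 0.
Proof.
move=> _ _ _ _ _ z _; rewrite /scalT; apply: big1 => a _; apply: big1 => b _.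
case: (split_ordP b) => j ->; last by rewrite ricT_vert_r mul0r.
case: (split_ordP a) => i ->; first by rewrite invmx_gext_horiz mulr0.
by rewrite ricT_vert_horiz mul0r.
Qed.
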